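(* Let $k_1,k_2$ be constants with $0<k_2\le 1$ and $8k_2^2+6k_1-3<0$. Let $J'=(z_w,z_w')$ be a nonempty open interval, let $r:J'\to\mathbb{R}$ be differentiable, and let $h:J'\to\mathbb{R}$ be differentiable with $\dot h(z)=1+h(z)^2-2r(z)h(z)$ on $J'$, having exactly one zero $z_*\in J'$. Let $G(z)=z-\dfrac{2h(z)}{2+h(z)^2-2r(z)h(z)}$ and $z_{n+1}=G(z_n)$. (1) If $0<r(z)<k_2$ and $\dot r(z)<k_1$ for all $z\in(z_*,z_w')$, then for every $z_0\in(z_*,z_w')$ the iterates are well defined and $(z_n)$ decreases monotonically to $z_*$. (2) If $-k_2<r(z)<0$ and $\dot r(z)<k_1$ for all $z\in(z_w,z_* )$, then for every $z_0\in(z_w,z_* )$ the iterates are well defined and $(z_n)$ increases monotonically to $z_*$.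
   Context: $\dot{}$ denotes differentiation with respect to $z$. Here $h<0$ on $(z_w,z_* )$ and $h>0$ on $(z_*,z_w')$. *)

From Stdlib Require Import Reals.
Open Scope R_scope.

Definition Gden (r h : R -> R) (z : R) : R := 2 + (h z)^2 - 2 * r z * h z.

Definition Gmap (r h : R -> R) (z : R) : R := z - 2 * h z / Gden r h z.

Fixpoint Giter (r h : R -> R) (z0 : R) (n : nat) : R :=
  match n with
  | O => z0
  | S m => Gmap r h (Giter r h z0 m)
  end.

(* Differentiating, G' = h^2 (3 h^2 - 8 r h + 4 r^2 + 2 - 4 r') / (2 + h^2 - 2 r h)^2,
   and completing the square, 3 h^2 - 8 r h + 4 r^2 >= -4 r^2 / 3 > -4 k2^2 / 3, so the
   hypothesis 8 k2^2 + 6 k1 < 3 makes G' > 0 away from z_*, while k2 <= 1 keeps the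
   denominator positive.  Hence G is increasing with fixed point z_*; on the right of z_*,
   where h > 0, this gives z_* < G z < z, so the iterates decrease and stay above z_*.
   Their limit is a fixed point of the continuous map G, i.e. a zero of h, hence z_*.
   The left half follows by the point reflection h |-> -h(-z), r |-> -r(-z), which
   preserves the Riccati equation and conjugates G to itself. *)

From Stdlib Require Import Reals Lra Psatz.
From Coquelicot Require Import Coquelicot.
Open Scope R_scope.

Lemma lt_of_derive_pos (f f' : R -> R) (a b : R) :
  a < b ->
  (forall c, a <= c <= b -> derivable_pt_lim f c (f' c)) ->
  (forall c, a < c < b -> 0 < f' c) ->
  f a < f b.
Proof.
  intros Hab Hd Hpos.
  destruct (MVT_cor2 f f' a b Hab Hd) as [c [Hmvt Hc]].
  specialize (Hpos c Hc). nra.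
Qed.

Lemma continuity_pt_of_lim (f : R -> R) (x l : R) :
  derivable_pt_lim f x l -> continuity_pt f x.
Proof. intro Hd. apply derivable_continuous_pt. exists l. exact Hd. Qed.

Lemma pos_right_of_simple_zero (f : R -> R) (l a b : R) :
  (forall x, a < x < b -> continuity_pt f x) ->
  derivable_pt_lim f a l -> 0 < l -> f a = 0 ->
  (forall x, a < x < b -> f x <> 0) ->
  forall x, a < x < b -> 0 < f x.
Proof.
  intros Hc Hd Hl Ha Hnz x Hx.
  assert (Hnear : exists y, a < y < x /\ 0 < f y).
  { destruct (Hd l Hl) as [delta Hdelta].
    set (d := Rmin (delta / 2) ((x - a) / 2)).
    assert (Hd_pos : 0 < d)
      by (apply Rmin_glb_lt; pose proof (cond_pos delta); lra).
    assert (Hd_delta : d <= delta / 2) by apply Rmin_l.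
    assert (Hd_x : d <= (x - a) / 2) by apply Rmin_r.
    specialize (Hdelta d ltac:(lra)
                  ltac:(rewrite Rabs_right; pose proof (cond_pos delta); lra)).
    rewrite Ha, Rminus_0_r in Hdelta.
    apply Rabs_def2 in Hdelta.
    exists (a + d). split; [lra|].
    replace (f (a + d)) with (f (a + d) / d * d) by (field; lra).
    apply Rmult_lt_0_compat; lra. }
  destruct Hnear as [y [Hy Hfy]].
  destruct (Rtotal_order (f x) 0) as [Hfx|[Hfx|Hfx]];
    [exfalso | exfalso; exact (Hnz x Hx Hfx) | exact Hfx].
  destruct (Ranalysis5.IVT_interv (- f)%F y x) as [t [Ht Hft]];
    unfold opp_fct in *; try lra.
  - intros t Ht. apply continuity_pt_opp, Hc. lra.
  - apply (Hnz t); lra.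
Qed.

Lemma Un_cv_fixpoint (f : R -> R) (u : nat -> R) (l : R) :
  continuity_pt f l -> (forall n, u (S n) = f (u n)) -> Un_cv u l -> f l = l.
Proof.
  intros Hc Hu Hl.
  apply (UL_sequence (fun n => f (u n))).
  - exact (continuity_seq f u l Hc Hl).
  - intros eps Heps. destruct (Hl eps Heps) as [N HN].
    exists N. intros n Hn. rewrite <- Hu. apply HN. lia.
Qed.

Lemma derivable_pt_lim_Gmap (r h : R -> R) (z rd : R) :
  derivable_pt_lim r z rd ->
  derivable_pt_lim h z (1 + h z ^ 2 - 2 * r z * h z) ->
  Gden r h z <> 0 ->
  derivable_pt_lim (Gmap r h) z
    (h z ^ 2 * (3 * h z ^ 2 - 8 * r z * h z + 4 * r z ^ 2 + 2 - 4 * rd)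
     / Gden r h z ^ 2).
Proof.
  intros Hr Hh HD.
  apply is_derive_Reals in Hr. apply is_derive_Reals in Hh.
  apply is_derive_Reals. unfold Gmap, Gden in *.
  auto_derive.
  - repeat split; try (eexists; eassumption). exact HD.
  - change (Derive (fun x => h x) z) with (Derive h z).
    change (Derive (fun x => r x) z) with (Derive r z).
    rewrite (is_derive_unique _ _ _ Hh), (is_derive_unique _ _ _ Hr).
    field. intro E. apply HD. rewrite <- E. ring.
Qed.

Lemma Gden_pos (r h : R -> R) (z : R) : r z ^ 2 < 2 -> 0 < Gden r h z.
Proof.
  intro Hr. unfold Gden.
  assert (0 <= (h z - r z) ^ 2) by apply pow2_ge_0. nra.
Qed.

Lemma Gdot_factor_pos (k1 k2 H R P : R) :
  8 * k2 ^ 2 + 6 * k1 - 3 < 0 -> - k2 < R < k2 -> P < k1 ->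
  0 < 3 * H ^ 2 - 8 * R * H + 4 * R ^ 2 + 2 - 4 * P.
Proof.
  intros Hk HR HP.
  assert (0 <= (3 * H - 4 * R) ^ 2) by apply pow2_ge_0.
  nra.
Qed.

Section NewtonFromTheRight.

Variables (k1 k2 : R) (r rd h : R -> R) (zw zw' zs : R).
Hypothesis k2_le1 : k2 <= 1.
Hypothesis k_ineq : 8 * k2 ^ 2 + 6 * k1 - 3 < 0.
Hypothesis r_deriv : forall z, zw < z < zw' -> derivable_pt_lim r z (rd z).
Hypothesis h_ode :
  forall z, zw < z < zw' -> derivable_pt_lim h z (1 + h z ^ 2 - 2 * r z * h z).
Hypothesis zs_in : zw < zs < zw'.
Hypothesis h_zs : h zs = 0.
Hypothesis h_pos : forall z, zs < z < zw' -> 0 < h z.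
Hypothesis r_bounds : forall z, zs < z < zw' -> - k2 < r z < k2 /\ rd z < k1.

Lemma Gden_pos_right (z : R) : zs <= z < zw' -> 0 < Gden r h z.
Proof.
  intro Hz. destruct (Rle_lt_or_eq_dec _ _ (proj1 Hz)) as [Hlt|<-].
  - apply Gden_pos. destruct (r_bounds z ltac:(lra)) as [Hr _]. nra.
  - unfold Gden. rewrite h_zs. lra.
Qed.

Lemma Gmap_fix_zs : Gmap r h zs = zs.
Proof. unfold Gmap, Gden. rewrite h_zs. field. Qed.

Lemma Gmap_between (z : R) : zs < z < zw' -> zs < Gmap r h z < z.
Proof.
  intro Hz. split.
  - rewrite <- Gmap_fix_zs at 1.
    apply (lt_of_derive_pos _ (fun c => h c ^ 2 *
             (3 * h c ^ 2 - 8 * r c * h c + 4 * r c ^ 2 + 2 - 4 * rd c)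
             / Gden r h c ^ 2)); [lra| |].
    + intros c Hc. apply derivable_pt_lim_Gmap.
      * apply r_deriv. lra.
      * apply h_ode. lra.
      * apply Rgt_not_eq, Gden_pos_right. lra.
    + intros c Hc. destruct (r_bounds c ltac:(lra)) as [Hr Hrd].
      assert (0 < h c) by (apply h_pos; lra).
      assert (0 < Gden r h c) by (apply Gden_pos_right; lra).
      apply Rdiv_lt_0_compat; [apply Rmult_lt_0_compat|]; try (apply pow_lt; lra).
      exact (Gdot_factor_pos k1 k2 (h c) (r c) (rd c) k_ineq Hr Hrd).
  - unfold Gmap.
    assert (0 < h z) by (apply h_pos; lra).
    assert (0 < Gden r h z) by (apply Gden_pos_right; lra).
    assert (0 < 2 * h z / Gden r h z) by (apply Rdiv_lt_0_compat; lra).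
    lra.
Qed.

Lemma Giter_between (z0 : R) (n : nat) :
  zs < z0 < zw' -> zs < Giter r h z0 n <= z0.
Proof.
  intro Hz0. induction n as [|n IH]; simpl; [lra|].
  pose proof (Gmap_between (Giter r h z0 n) ltac:(lra)). lra.
Qed.

Lemma Giter_decreasing (z0 : R) : zs < z0 < zw' -> Un_decreasing (Giter r h z0).
Proof.
  intros Hz0 n. simpl.
  pose proof (Giter_between z0 n Hz0).
  pose proof (Gmap_between (Giter r h z0 n) ltac:(lra)). lra.
Qed.

Lemma Giter_cv_zs (z0 : R) : zs < z0 < zw' -> Un_cv (Giter r h z0) zs.
Proof.
  intro Hz0.
  destruct (decreasing_cv _ (Giter_decreasing z0 Hz0)) as [l Hl].
  { exists (- zs). intros x [n ->]. unfold opp_seq.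
    pose proof (Giter_between z0 n Hz0). lra. }
  assert (Hzs_l : zs <= l).
  { assert (Hconst : Un_cv (fun _ => zs) zs).
    { intros eps Heps. exists O. intros. unfold Rdist. rewrite Rminus_diag, Rabs_R0. lra. }
    refine (Rle_cv_lim _ Hconst Hl). intro n. pose proof (Giter_between z0 n Hz0). lra. }
  assert (Hl_z0 : l <= z0) by exact (decreasing_ineq _ l (Giter_decreasing z0 Hz0) Hl O).
  destruct (Rle_lt_or_eq_dec _ _ Hzs_l) as [Hlt|<-]; [exfalso|exact Hl].
  assert (Hfix : Gmap r h l = l).
  { apply (Un_cv_fixpoint _ (Giter r h z0)); [|reflexivity|exact Hl].
    eapply continuity_pt_of_lim, derivable_pt_lim_Gmap.
    - apply r_deriv. lra.
    - apply h_ode. lra.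
    - apply Rgt_not_eq, Gden_pos_right. lra. }
  pose proof (Gmap_between l ltac:(lra)). lra.
Qed.

Lemma newton_iteration_right (z0 : R) :
  zs < z0 < zw' ->
  (forall n, zs < Giter r h z0 n < zw' /\ 0 < Gden r h (Giter r h z0 n)) /\
  Un_decreasing (Giter r h z0) /\ Un_cv (Giter r h z0) zs.
Proof.
  intro Hz0. split; [|split].
  - intro n. pose proof (Giter_between z0 n Hz0).
    split; [lra|]. apply Gden_pos_right. lra.
  - exact (Giter_decreasing z0 Hz0).
  - exact (Giter_cv_zs z0 Hz0).
Qed.

End NewtonFromTheRight.

Definition refl_fct (f : R -> R) : R -> R := (- mirr_fct f)%F.

Lemma derivable_pt_lim_refl (f : R -> R) (x l : R) :
  derivable_pt_lim f (- x) l -> derivable_pt_lim (refl_fct f) x l.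
Proof.
  intro Hd. apply derivable_pt_lim_opp_fwd, derivable_pt_lim_mirr_fwd.
  now rewrite Ropp_involutive.
Qed.

Lemma Gden_refl (r h : R -> R) (z : R) :
  Gden (refl_fct r) (refl_fct h) z = Gden r h (- z).
Proof. unfold Gden, refl_fct, opp_fct, mirr_fct. ring. Qed.

Lemma Gmap_refl (r h : R -> R) (z : R) :
  Gmap (refl_fct r) (refl_fct h) z = - Gmap r h (- z).
Proof.
  unfold Gmap. rewrite Gden_refl. unfold refl_fct, opp_fct, mirr_fct, Rdiv. ring.
Qed.

Lemma Giter_refl (r h : R -> R) (z0 : R) (n : nat) :
  Giter (refl_fct r) (refl_fct h) (- z0) n = - Giter r h z0 n.
Proof.
  induction n as [|n IH]; simpl; [reflexivity|].
  now rewrite IH, Gmap_refl, Ropp_involutive.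
Qed.

Section Riccati.

Variables (r rd h : R -> R) (zw zw' zs : R).
Hypothesis r_deriv : forall z, zw < z < zw' -> derivable_pt_lim r z (rd z).
Hypothesis h_ode :
  forall z, zw < z < zw' -> derivable_pt_lim h z (1 + h z ^ 2 - 2 * r z * h z).
Hypothesis zs_in : zw < zs < zw'.
Hypothesis h_zs : h zs = 0.

Lemma refl_r_deriv (z : R) :
  - zw' < z < - zw -> derivable_pt_lim (refl_fct r) z (rd (- z)).
Proof. intro Hz. apply derivable_pt_lim_refl, r_deriv. lra. Qed.

Lemma refl_h_ode (z : R) :
  - zw' < z < - zw ->
  derivable_pt_lim (refl_fct h) z
    (1 + refl_fct h z ^ 2 - 2 * refl_fct r z * refl_fct h z).
Proof.
  intro Hz. apply derivable_pt_lim_refl.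
  replace (1 + refl_fct h z ^ 2 - 2 * refl_fct r z * refl_fct h z)
    with (1 + h (- z) ^ 2 - 2 * r (- z) * h (- z))
    by (unfold refl_fct, opp_fct, mirr_fct; ring).
  apply h_ode. lra.
Qed.

(* At a zero of [h] the equation gives [h' = 1], so [h] crosses zero upwards there. *)
Lemma h_pos_right :
  (forall z, zw < z < zw' -> h z = 0 -> z = zs) ->
  forall z, zs < z < zw' -> 0 < h z.
Proof.
  intro h_unique.
  apply (pos_right_of_simple_zero h 1); [| |lra|exact h_zs|].
  - intros x Hx. eapply continuity_pt_of_lim, h_ode. lra.
  - replace 1 with (1 + h zs ^ 2 - 2 * r zs * h zs) at 1 by (rewrite h_zs; ring).
    apply h_ode. lra.
  - intros x Hx E. apply h_unique in E; lra.
Qed.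

Lemma h_neg_left :
  (forall z, zw < z < zw' -> h z = 0 -> z = zs) ->
  forall z, zw < z < zs -> h z < 0.
Proof.
  intros h_unique z Hz.
  assert (Hrefl_zs : refl_fct h (- zs) = 0)
    by (unfold refl_fct, opp_fct, mirr_fct; rewrite Ropp_involutive, h_zs; ring).
  enough (0 < refl_fct h (- z))
    by (unfold refl_fct, opp_fct, mirr_fct in *; rewrite Ropp_involutive in *; lra).
  apply (pos_right_of_simple_zero _ 1 (- zs) (- zw)); [| |lra|exact Hrefl_zs| |lra].
  - intros x Hx. eapply continuity_pt_of_lim, refl_h_ode. lra.
  - replace 1 with (1 + refl_fct h (- zs) ^ 2
                    - 2 * refl_fct r (- zs) * refl_fct h (- zs)) at 1
      by (rewrite Hrefl_zs; ring).
    apply refl_h_ode. lra.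
  - intros x Hx E. unfold refl_fct, opp_fct, mirr_fct in E.
    assert (- x = zs) by (apply h_unique; lra). lra.
Qed.

Lemma newton_iteration_left (k1 k2 : R) :
  k2 <= 1 -> 8 * k2 ^ 2 + 6 * k1 - 3 < 0 ->
  (forall z, zw < z < zs -> h z < 0) ->
  (forall z, zw < z < zs -> - k2 < r z < k2 /\ rd z < k1) ->
  forall z0, zw < z0 < zs ->
  (forall n, zw < Giter r h z0 n < zs /\ 0 < Gden r h (Giter r h z0 n)) /\
  Un_growing (Giter r h z0) /\ Un_cv (Giter r h z0) zs.
Proof.
  intros k2_le1 k_ineq h_neg r_bounds z0 Hz0.
  assert (Hrefl_zs : refl_fct h (- zs) = 0).
  { unfold refl_fct, opp_fct, mirr_fct. rewrite Ropp_involutive, h_zs. ring. }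
  assert (Hrefl_pos : forall z, - zs < z < - zw -> 0 < refl_fct h z).
  { intros z Hz. unfold refl_fct, opp_fct, mirr_fct.
    rewrite <- Ropp_0. apply Ropp_lt_contravar, h_neg. lra. }
  assert (Hrefl_bounds : forall z, - zs < z < - zw ->
            - k2 < refl_fct r z < k2 /\ rd (- z) < k1).
  { intros z Hz. unfold refl_fct, opp_fct, mirr_fct.
    destruct (r_bounds (- z) ltac:(lra)). lra. }
  destruct (newton_iteration_right k1 k2 (refl_fct r) (fun z => rd (- z))
              (refl_fct h) (- zw') (- zw) (- zs) k2_le1 k_ineq
              refl_r_deriv refl_h_ode ltac:(lra) Hrefl_zs Hrefl_pos Hrefl_bounds
              (- z0) ltac:(lra)) as [Hin [Hdec Hcv]].
  split; [|split].
  - intro n. destruct (Hin n) as [Hn HD].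
    rewrite Giter_refl in Hn. rewrite Giter_refl, Gden_refl, Ropp_involutive in HD.
    split; [lra|exact HD].
  - intro n. specialize (Hdec n). rewrite !Giter_refl in Hdec. lra.
  - apply CV_opp in Hcv. rewrite Ropp_involutive in Hcv.
    refine (Un_cv_ext _ _ _ zs Hcv). intro n.
    unfold opp_seq. rewrite Giter_refl. apply Ropp_involutive.
Qed.

End Riccati.

Theorem theorem3p7 (k1 k2 zw zw' zs : R) (r rd h : R -> R) :
  0 < k2 -> k2 <= 1 -> 8 * k2^2 + 6 * k1 - 3 < 0 ->
  zw < zw' ->
  (forall z, zw < z < zw' -> derivable_pt_lim r z (rd z)) ->
  (forall z, zw < z < zw' -> derivable_pt_lim h z (1 + (h z)^2 - 2 * r z * h z)) ->
  zw < zs < zw' -> h zs = 0 ->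
  (forall z, zw < z < zw' -> h z = 0 -> z = zs) ->
  ( (forall z, zs < z < zw' -> 0 < r z < k2 /\ rd z < k1) ->
    forall z0, zs < z0 < zw' ->
      (forall n, zw < Giter r h z0 n < zw' /\ Gden r h (Giter r h z0 n) <> 0) /\
      Un_decreasing (Giter r h z0) /\ Un_cv (Giter r h z0) zs )
  /\
  ( (forall z, zw < z < zs -> - k2 < r z < 0 /\ rd z < k1) ->
    forall z0, zw < z0 < zs ->
      (forall n, zw < Giter r h z0 n < zw' /\ Gden r h (Giter r h z0 n) <> 0) /\
      Un_growing (Giter r h z0) /\ Un_cv (Giter r h z0) zs ).
Proof.
  intros k2_pos k2_le1 k_ineq _ r_deriv h_ode zs_in h_zs h_unique.
  pose proof (h_pos_right r h zw zw' zs h_ode zs_in h_zs h_unique) as h_pos.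
  pose proof (h_neg_left r h zw zw' zs h_ode zs_in h_zs h_unique) as h_neg.
  split.
  - intros r_right z0 Hz0.
    assert (r_bounds : forall z, zs < z < zw' -> - k2 < r z < k2 /\ rd z < k1)
      by (intros z Hz; destruct (r_right z Hz); split; [lra|assumption]).
    destruct (newton_iteration_right k1 k2 r rd h zw zw' zs k2_le1 k_ineq
                r_deriv h_ode zs_in h_zs h_pos r_bounds z0 Hz0) as [Hin [Hdec Hcv]].
    repeat split; try assumption; destruct (Hin n); lra.
  - intros r_left z0 Hz0.
    assert (r_bounds : forall z, zw < z < zs -> - k2 < r z < k2 /\ rd z < k1)
      by (intros z Hz; destruct (r_left z Hz); split; [lra|assumption]).
    destruct (newton_iteration_left r rd h zw zw' zs r_deriv h_ode zs_in h_zs k1 k2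
                k2_le1 k_ineq h_neg r_bounds z0 Hz0) as [Hin [Hgrow Hcv]].
    repeat split; try assumption; destruct (Hin n); lra.
Qed.
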